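(* Assume the stationary generator setting described in the context (for a process $(X_t)$ with memory $(R_t)$), and let $k\ge1$. Then $$H(R_k,X_{1:k})-H(R_0,X_{1:k})=I(R_0;X_{1:k})-I(R_k;X_{1:k})=\zeta_R(k)-I\big(\overleftarrow X;R_0\,\big|\,\overrightarrow X,R_k\big).$$
   Context: Stationary generator setting: $\mathcal X$ and $\mathcal R$ finite sets; $(X_t,R_t)_{t\in\mathbb Z}$ jointly stationary with $X_t\in\mathcal X$, $R_t\in\mathcal R$ (memory after $X_t$). Generator condition: for every $t$, $\big((X_s)_{s\le t},(R_s)_{s<t}\big)$ is conditionally independent of $\big((X_s)_{s>t},(R_s)_{s>t}\big)$ given $R_t$. Notation: $X_{a:b}=(X_a,\dots,X_b)$, $\overleftarrow X=(\dots,X_{-1},X_0)$, $\overrightarrow X=(X_1,X_2,\dots)$; information quantities with infinite sequences are limits of finite windows. Oracular information: $\zeta_R(k):=I(X_{1:k};R_0\mid\overleftarrow X)$. *)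

From mathcomp Require Import all_boot.
From Stdlib Require Import Reals.

Local Open Scope R_scope.

(* A jointly stationary process ((X_t,R_t))_{t in Z} with values in finite   *)
(* sets Xs, Rs is described by its (shift-invariant) finite-dimensional law:  *)
(* law n w = Pr[(X_{a+i},R_{a+i})_{i<n} = w] for any a (independent of a).    *)

Definition window (Xs Rs : finType) (n : nat) := {ffun 'I_n -> Xs * Rs}.

Definition wtail {Xs Rs : finType} (n : nat) (w : window Xs Rs n.+1) : window Xs Rs n :=
  [ffun i => w (lift ord0 i)].
Definition winit {Xs Rs : finType} (n : nat) (w : window Xs Rs n.+1) : window Xs Rs n :=
  [ffun i => w (widen_ord (leqnSn n) i)].

Definition stationary_law {Xs Rs : finType}
    (law : forall n, window Xs Rs n -> R) : Prop :=
  (forall n w, 0 <= law n w) /\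
  (forall w, law 0%nat w = 1) /\
  (forall n (w : window Xs Rs n),
      law n w = \big[Rplus/0]_(w' : window Xs Rs n.+1 | winit n w' == w) law n.+1 w') /\
  (forall n (w : window Xs Rs n),
      law n w = \big[Rplus/0]_(w' : window Xs Rs n.+1 | wtail n w' == w) law n.+1 w').

Definition proj {Xs Rs : finType} L (sx sr : seq nat) (w : window Xs Rs L.+1)
  : seq Xs * seq Rs :=
  ([seq (w (inord i)).1 | i <- sx], [seq (w (inord i)).2 | i <- sr]).

Definition prob {Xs Rs : finType} (law : forall n, window Xs Rs n -> R) L
    (sx sr : seq nat) (w : window Xs Rs L.+1) : R :=
  \big[Rplus/0]_(w' : window Xs Rs L.+1 | proj L sx sr w' == proj L sx sr w) law L.+1 w'.

Definition ent {Xs Rs : finType} (law : forall n, window Xs Rs n -> R) L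
    (sx sr : seq nat) : R :=
  - \big[Rplus/0]_(w : window Xs Rs L.+1) (law L.+1 w * ln (prob law L sx sr w)).

(* A variable = (positions of X's, positions of R's) in the window. *)
Definition var := (seq nat * seq nat)%type.
Definition vjoin (a b : var) : var := (a.1 ++ b.1, a.2 ++ b.2).

Definition H {Xs Rs : finType} (law : forall n, window Xs Rs n -> R) L (a : var) : R := ent law L a.1 a.2.

Definition MI {Xs Rs : finType} (law : forall n, window Xs Rs n -> R) L (a b : var) : R :=
  H law L a + H law L b - H law L (vjoin a b).
Definition CMI {Xs Rs : finType} (law : forall n, window Xs Rs n -> R) L (a b c : var) : R :=
  H law L (vjoin a c) + H law L (vjoin b c)
  - H law L (vjoin (vjoin a b) c) - H law L c.

(* Generator condition: in every finite window (positions 0..L) and every    *)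
(* t <= L, ((X_s)_{s<=t},(R_s)_{s<t}) is conditionally independent of       *)
(* ((X_s)_{s>t},(R_s)_{s>t}) given R_t.  (By stationarity and finite-        *)
(* dimensionality this is the generator condition of the paper.)             *)
Definition generator_cond {Xs Rs : finType} (law : forall n, window Xs Rs n -> R) : Prop :=
  forall L t (w : window Xs Rs L.+1), (t <= L)%nat ->
    let past := (iota 0 t.+1, iota 0 t) in
    let rt := ([::], [:: t]) in
    let fut := (iota t.+1 (L - t), iota t.+1 (L - t)) in
    prob law L (vjoin (vjoin past rt) fut).1 (vjoin (vjoin past rt) fut).2 w
      * prob law L rt.1 rt.2 w
    = prob law L (vjoin past rt).1 (vjoin past rt).2 w
      * prob law L (vjoin rt fut).1 (vjoin rt fut).2 w.

Definition dlim (u : nat -> nat -> R) (l : R) : Prop :=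
  forall eps, eps > 0 -> exists N, forall m n, (N <= m)%nat -> (N <= n)%nat ->
    Rabs (u m n - l) < eps.

Definition X1k (k : nat) : var := (iota 1 k, [::]).

(* zeta_R(k) approximant with past X_{-m:0}: window times -m..k, L = m+k,  *)
(* time t sits at position t+m.                                            *)
Definition zeta_approx {Xs Rs : finType} (law : forall n, window Xs Rs n -> R) (k m : nat) : R :=
  CMI law (m + k) (iota m.+1 k, [::]) ([::], [:: m]) (iota 0 m.+1, [::]).

(* approximant of I(past X ; R_0 | future X, R_k) with past X_{-m:0} and    *)
(* future X_{1:n+k}: window times -m..n+k, L = m+n+k, time t at position t+m *)
Definition J_approx {Xs Rs : finType} (law : forall n, window Xs Rs n -> R) (k m n : nat) : R :=
  CMI law (m + n + k) (iota 0 m.+1, [::]) ([::], [:: m])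
       (iota m.+1 (n + k), [:: (m + k)%nat]).

(* The first identity is stationarity of the memory, H(R_0) = H(R_k).  For the
   second, truncate the past to X_{-m:0} and work in a finite window.  The
   generator condition at time 0 gives I(X_{1:k}; R_0 | X_{-m:0})
   = H(X_{1:k} | X_{-m:0}) - H(X_{1:k} | R_0), a nonincreasing nonnegative
   sequence, hence convergent; at time k it makes the approximants of
   I(past; R_0 | future, R_k) independent of how much future is kept.  Applying
   the generator condition once more, sliding X_{-m:0} by k, and using the chain
   rule gives the exact identity
     J_m = zeta_m - (I(R_0; X_{1:k}) - I(R_k; X_{1:k})) + a_{m-k} - a_m,
   with a_j = I(R_k; X_{-j:0} | X_{1:k}) nondecreasing and bounded, so the
   a-terms cancel in the limit.  The only analytic input is the nonnegativity of
   conditional mutual information, from ln x <= x - 1. *)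

From mathcomp Require Import all_boot zify Rstruct.
From Stdlib Require Import Reals Lra.
Local Open Scope R_scope.

Lemma sumR_ge0 (I : Type) (r : seq I) (P : pred I) (F : I -> R) :
  (forall i, P i -> 0 <= F i) -> 0 <= \big[Rplus/0]_(i <- r | P i) F i.
Proof. by move=> F_ge0; apply: big_ind => //; [lra | move=> x y; lra]. Qed.

Lemma ler_sumR (I : Type) (r : seq I) (P : pred I) (F G : I -> R) :
  (forall i, P i -> F i <= G i) ->
  \big[Rplus/0]_(i <- r | P i) F i <= \big[Rplus/0]_(i <- r | P i) G i.
Proof. by move=> FG; apply: big_ind2 => //; [lra | move=> x1 x2 y1 y2; lra]. Qed.

Lemma sumRN (I : Type) (r : seq I) (P : pred I) (F : I -> R) :
  \big[Rplus/0]_(i <- r | P i) - F i = - \big[Rplus/0]_(i <- r | P i) F i.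
Proof. by rewrite (big_morph Ropp Ropp_plus_distr Ropp_0). Qed.

Lemma ln_le_subr1 y : 0 < y -> ln y <= y - 1.
Proof. by move=> y_gt0; have := exp_ineq1_le (ln y); rewrite exp_ln //; lra. Qed.

Lemma Rinv_ge0 x : 0 <= x -> 0 <= / x.
Proof.
case=> [x_gt0|<-]; last by rewrite Rinv_0; lra.
by left; apply: Rinv_0_lt_compat.
Qed.

Section Entropy.
Variables (W : finType) (mu : W -> R).

Definition pr {T : eqType} (k : W -> T) (w : W) : R :=
  \big[Rplus/0]_(w' | k w' == k w) mu w'.

Definition entropy {T : eqType} (k : W -> T) : R :=
  - \big[Rplus/0]_w (mu w * ln (pr k w)).

Definition cmi {T1 T2 T3 : eqType} (ka : W -> T1) (kb : W -> T2) (kc : W -> T3) : R :=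
  entropy (fun w => (ka w, kc w)) + entropy (fun w => (kb w, kc w))
  - entropy (fun w => (ka w, kb w, kc w)) - entropy kc.

Lemma pr_eq {T : eqType} {k : W -> T} {w w0 : W} : k w = k w0 -> pr k w = pr k w0.
Proof. by rewrite /pr => ->. Qed.

Lemma entropy_ext (T1 T2 : eqType) (k1 : W -> T1) (k2 : W -> T2) :
  (forall w w', (k1 w' == k1 w) = (k2 w' == k2 w)) -> entropy k1 = entropy k2.
Proof.
move=> k12; rewrite /entropy; congr (- _); apply: eq_bigr => w _.
by congr (_ * ln _); apply: eq_bigl => w'; exact: k12.
Qed.

Hypothesis mu_ge0 : forall w, 0 <= mu w.

Lemma pr_ge0 {T : eqType} (k : W -> T) w : 0 <= pr k w.
Proof. exact: sumR_ge0. Qed.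

Lemma mass_le_pr {T : eqType} (k : W -> T) w : mu w <= pr k w.
Proof.
rewrite /pr (bigD1 w) //=.
have : 0 <= \big[Rplus/0]_(i | (k i == k w) && (i != w)) mu i by apply: sumR_ge0.
lra.
Qed.

Lemma pr_gt0 {T : eqType} (k : W -> T) w : 0 < mu w -> 0 < pr k w.
Proof. by move=> mu_gt0; apply: Rlt_le_trans (mass_le_pr k w). Qed.

Lemma sum_in_class_le1 {T : eqType} (k : W -> T) (P : pred W) :
  (forall w w', P w -> P w' -> k w = k w') ->
  \big[Rplus/0]_(w | P w) (mu w / pr k w) <= 1.
Proof.
move=> Pk; case: (pickP P) => [w0 Pw0 | P0]; last by rewrite big_pred0 //; lra.
rewrite (eq_bigr (fun w => mu w * / pr k w0)); last first.
  by move=> w Pw; rewrite /Rdiv (pr_eq (Pk _ _ Pw Pw0)).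
rewrite -big_distrl /=.
have le_pr : \big[Rplus/0]_(w | P w) mu w <= pr k w0.
  have -> : \big[Rplus/0]_(w | P w) mu w = \big[Rplus/0]_(w | (k w == k w0) && P w) mu w.
    by apply: eq_bigl => w; apply/idP/andP => [Pw|[]//]; rewrite (Pk _ _ Pw Pw0).
  rewrite /pr [X in _ <= X](bigID P) /=.
  have : 0 <= \big[Rplus/0]_(i | (k i == k w0) && ~~ P i) mu i by apply: sumR_ge0.
  lra.
have := pr_ge0 k w0; case: (Req_dec (pr k w0) 0) => [->|nz0] ge0.
  by rewrite Rinv_0 Rmult_0_r; lra.
apply: (Rle_trans _ (pr k w0 * / pr k w0)); last by rewrite Rinv_r; [lra|].
by apply: Rmult_le_compat_r => //; apply: Rinv_ge0.
Qed.

Lemma sum_mass_ln_le (F : W -> R) : (forall w, 0 < mu w -> 0 < F w) ->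
  \big[Rplus/0]_w (mu w * ln (F w))
  <= \big[Rplus/0]_w (mu w * F w) - \big[Rplus/0]_w mu w.
Proof.
move=> F_gt0; rewrite /Rminus -sumRN -big_split /=; apply: ler_sumR => w _.
have [mu_gt0|<-] := Rle_lt_or_eq_dec _ _ (mu_ge0 w); last lra.
have := ln_le_subr1 _ (F_gt0 w mu_gt0); nra.
Qed.

Section Ratio.
Variables (T1 T2 T3 : eqType) (fa : W -> T1) (fb : W -> T2) (fc : W -> T3).
Let kA w := (fa w, fc w).
Let kB w := (fb w, fc w).
Let kABC w := (fa w, fb w, fc w).

Definition cmi_ratio (w : W) : R := pr kA w * pr kB w / (pr kABC w * pr fc w).

Lemma cmi_ratio_gt0 w : 0 < mu w -> 0 < cmi_ratio w.
Proof.
move=> mu_gt0; have pA := pr_gt0 kA w mu_gt0; have pB := pr_gt0 kB w mu_gt0.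
have pABC := pr_gt0 kABC w mu_gt0; have pC := pr_gt0 fc w mu_gt0.
by rewrite /cmi_ratio /Rdiv; apply: Rmult_lt_0_compat; [nra|apply: Rinv_0_lt_compat; nra].
Qed.

(* Expanding [pr kA w] and [pr kB w] turns the sum into a triple sum over
   [(w1, w2, w)]; summing first over [w], which then ranges over a single
   [kABC]-class, gives at most [mu w1 * mu w2 / pr fc w2]. *)
Lemma sum_mass_cmi_ratio_le :
  \big[Rplus/0]_w (mu w * cmi_ratio w) <= \big[Rplus/0]_w mu w.
Proof.
pose F w1 w2 w := if (kA w1 == kA w) && (kB w2 == kB w)
  then mu w1 * (mu w2 / pr fc w2) * (mu w / pr kABC w) else 0.
have expand w : mu w * cmi_ratio w = \big[Rplus/0]_w1 \big[Rplus/0]_w2 F w1 w2 w.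
  have sumB : \big[Rplus/0]_(w2 | kB w2 == kB w) (mu w2 / pr fc w2) = pr kB w / pr fc w.
    rewrite /Rdiv big_distrl /=; apply: eq_bigr => w2 /eqP[_ c2].
    by rewrite (pr_eq c2).
  transitivity (pr kA w * (pr kB w / pr fc w) * (mu w / pr kABC w)).
    by rewrite /cmi_ratio /Rdiv Rinv_mult; ring.
  rewrite -sumB [pr kA w]/pr !big_distrl (big_mkcond (fun w1 => kA w1 == kA w)) /=.
  apply: eq_bigr => w1 _; rewrite /F; case: (kA w1 == kA w); last first.
    by rewrite big1 //= => w2 _; rewrite !Rmult_0_l.
  rewrite big_distrr big_distrl (big_mkcond (fun w2 => kB w2 == kB w)) /=.
  by apply: eq_bigr => w2 _; case: (kB w2 == kB w) => //; rewrite !Rmult_0_r Rmult_0_l.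
have inner w1 w2 : \big[Rplus/0]_w F w1 w2 w
    <= if fc w2 == fc w1 then mu w1 * (mu w2 / pr fc w2) else 0.
  case: (eqVneq (fc w2) (fc w1)) => [_|c21]; last first.
    rewrite big1; first lra.
    move=> w _; rewrite /F; case: andP => // [[/eqP[_ c1] /eqP[_ c2]]].
    by move: c21; rewrite c1 c2 eqxx.
  rewrite -big_mkcond -big_distrr /=.
  have c_ge0 : 0 <= mu w1 * (mu w2 / pr fc w2).
    by apply: Rmult_le_pos => //; apply: Rmult_le_pos => //; apply: Rinv_ge0; apply: pr_ge0.
  have : \big[Rplus/0]_(w | (kA w1 == kA w) && (kB w2 == kB w)) (mu w / pr kABC w) <= 1.
    apply: sum_in_class_le1 => w w' /andP[/eqP[a c] /eqP[b _]] /andP[/eqP[a' c'] /eqP[b' _]].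
    by rewrite /kABC -a -a' -b -b' -c -c'.
  nra.
rewrite (eq_bigr _ (fun w _ => expand w)) exchange_big /=.
apply: ler_sumR => w1 _; rewrite exchange_big /=.
apply: Rle_trans (ler_sumR _ _ _ _ _ (fun w2 _ => inner w1 w2)) _.
rewrite -big_mkcond -big_distrr /=.
have : \big[Rplus/0]_(w2 | fc w2 == fc w1) (mu w2 / pr fc w2) <= 1.
  by apply: sum_in_class_le1 => w w' /eqP-> /eqP->.
have := mu_ge0 w1; nra.
Qed.

Lemma cmi_eq_sum_ln : cmi fa fb fc = - \big[Rplus/0]_w (mu w * ln (cmi_ratio w)).
Proof.
rewrite /cmi /entropy.
rewrite [X in _ = - X](eq_bigr (fun w => mu w * ln (pr kA w) + mu w * ln (pr kB w)
    + - (mu w * ln (pr kABC w)) + - (mu w * ln (pr fc w)))); last first.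
  move=> w _; have [mu_gt0|<-] := Rle_lt_or_eq_dec _ _ (mu_ge0 w); last ring.
  have pA := pr_gt0 kA w mu_gt0; have pB := pr_gt0 kB w mu_gt0.
  have pABC := pr_gt0 kABC w mu_gt0; have pC := pr_gt0 fc w mu_gt0.
  rewrite /cmi_ratio /Rdiv ln_mult; [|nra|apply: Rinv_0_lt_compat; nra].
  rewrite ln_Rinv; last nra.
  rewrite !ln_mult //; ring.
by rewrite !big_split /= !sumRN; rewrite /kA /kB /kABC; ring.
Qed.

End Ratio.

Lemma cmi_ge0 (T1 T2 T3 : eqType) (fa : W -> T1) (fb : W -> T2) (fc : W -> T3) :
  0 <= cmi fa fb fc.
Proof.
rewrite cmi_eq_sum_ln.
have := sum_mass_ln_le _ (cmi_ratio_gt0 _ _ _ fa fb fc).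
have := sum_mass_cmi_ratio_le _ _ _ fa fb fc.
lra.
Qed.
End Entropy.

Arguments pr {W} mu {T} k w.
Arguments entropy {W} mu {T} k.
Arguments cmi {W} mu {T1 T2 T3} ka kb kc.
Arguments pr_gt0 {W mu} mu_ge0 {T} k w.

Lemma entropy_pushforward (W1 W2 : finType) (mu1 : W1 -> R) (mu2 : W2 -> R)
    (f : W1 -> W2) (T : eqType) (k1 : W1 -> T) (k2 : W2 -> T) :
  (forall u, mu2 u = \big[Rplus/0]_(w | f w == u) mu1 w) ->
  (forall w, k1 w = k2 (f w)) -> entropy mu1 k1 = entropy mu2 k2.
Proof.
move=> mu12 k12.
have pr12 w : pr mu1 k1 w = pr mu2 k2 (f w).
  rewrite /pr (partition_big f (fun u => k2 u == k2 (f w))) /=; last by move=> i; rewrite !k12.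
  apply: eq_bigr => u /eqP ku; rewrite mu12; apply: eq_bigl => i.
  by rewrite andbC; case: eqP => //= fi; rewrite !k12 fi ku eqxx.
rewrite /entropy; congr (- _).
rewrite (eq_bigr (fun w => mu1 w * ln (pr mu2 k2 (f w)))); last by move=> w _; rewrite pr12.
rewrite (partition_big f xpredT) //=; apply: eq_bigr => u _.
by rewrite mu12 big_distrl /=; apply: eq_bigr => w /eqP ->.
Qed.

Ltac mem_cases :=
  repeat match goal with
  | |- context [?x \in ?s] => case: (x \in s)
  | |- context [?x == ?y] => case: (x == y)
  end;
  intros; repeat match goal with h : is_true true -> _ |- _ => specialize (h isT) end.

Ltac mem_tauto := move=> ?; rewrite /= ?(mem_cat, in_cons, in_nil); mem_cases.

Lemma mem_map_addn d s i : (i \in map (addn d) s) = (d <= i)%nat && ((i - d)%nat \in s).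
Proof.
apply/mapP/andP => [[j hj ->]|[le_di hs]]; first by rewrite leq_addr addKn.
by exists (i - d)%nat; rewrite ?subnKC.
Qed.

Ltac positions_lia :=
  rewrite /= ?(mem_cat, mem_iota, in_cons, in_nil, mem_seq1, mem_map_addn); lia.

Ltac positions :=
  lazymatch goal with
  | |- is_true _ -> _ => positions_lia
  | |- forall _, _ => move=> ?; positions
  | |- _ /\ _ => split; positions
  | |- _ => first [progress hnf; positions | positions_lia]
  end.

Local Notation Xseg a n := (iota a n, [::]).
Local Notation Rpos t := ([::], [:: t]).

Section Window.
Context {Xs Rs : finType} (law : forall n, window Xs Rs n -> R).

Lemma H_entropy L (a : var) : H law L a = entropy (law L.+1) (proj L a.1 a.2).
Proof. by []. Qed.

Lemma proj_eq L sx sr (w w' : window Xs Rs L.+1) :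
  (proj L sx sr w' == proj L sx sr w) =
  all (fun i => (w' (inord i)).1 == (w (inord i)).1) sx &&
  all (fun i => (w' (inord i)).2 == (w (inord i)).2) sr.
Proof.
rewrite /proj xpair_eqE; congr andb.
- by elim: sx => //= i s <-; rewrite eqseq_cons.
- by elim: sr => //= i s <-; rewrite eqseq_cons.
Qed.

Lemma proj_vjoin_eq L (a b : var) (w w' : window Xs Rs L.+1) :
  (proj L (vjoin a b).1 (vjoin a b).2 w' == proj L (vjoin a b).1 (vjoin a b).2 w) =
  (proj L a.1 a.2 w' == proj L a.1 a.2 w) && (proj L b.1 b.2 w' == proj L b.1 b.2 w).
Proof. by rewrite !proj_eq !all_cat andbACA. Qed.

Lemma H_mem L (a b : var) : a.1 =i b.1 -> a.2 =i b.2 -> H law L a = H law L b.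
Proof.
move=> e1 e2; rewrite !H_entropy; apply: entropy_ext => w w'.
by rewrite !proj_eq (eq_all_r e1) (eq_all_r e2).
Qed.

Lemma CMI_mem L a b c a' b' c' :
  a.1 =i a'.1 -> a.2 =i a'.2 -> b.1 =i b'.1 -> b.2 =i b'.2 -> c.1 =i c'.1 -> c.2 =i c'.2 ->
  CMI law L a b c = CMI law L a' b' c'.
Proof.
move=> a1 a2 b1 b2 c1 c2; rewrite /CMI.
by congr (_ + _ - _ - _); apply: H_mem => i /=; rewrite ?mem_cat ?a1 ?a2 ?b1 ?b2 ?c1 ?c2.
Qed.

Lemma CMI_cmi L a b c :
  CMI law L a b c = cmi (law L.+1) (proj L a.1 a.2) (proj L b.1 b.2) (proj L c.1 c.2).
Proof.
rewrite /CMI /cmi !H_entropy.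
by congr (_ + _ - _ - _); apply: entropy_ext => w w'; rewrite !proj_vjoin_eq !xpair_eqE.
Qed.

Lemma CMI_chain L a b c : CMI law L a b c = MI law L a (vjoin b c) - MI law L a c.
Proof.
rewrite /CMI /MI (H_mem L (vjoin (vjoin a b) c) (vjoin a (vjoin b c))); first ring.
all: by mem_tauto.
Qed.

Hypothesis law_ge0 : forall n w, 0 <= law n w.

Lemma CMI_ge0 L a b c : 0 <= CMI law L a b c.
Proof. by rewrite CMI_cmi; apply: cmi_ge0. Qed.

Lemma CMI_sym L a b c : CMI law L a b c = CMI law L b a c.
Proof.
rewrite /CMI (H_mem L (vjoin (vjoin a b) c) (vjoin (vjoin b a) c)); first ring.
all: by mem_tauto.
Qed.

(* [CMI a2 b c - CMI a b c] is [CMI a2 b (a, c)] once [a] is absorbed into [(a2, c)]. *)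
Lemma CMI_mono_l L a a2 b c :
  {subset a.1 <= a2.1 ++ c.1} -> {subset a.2 <= a2.2 ++ c.2} ->
  CMI law L a b c <= CMI law L a2 b c.
Proof.
move=> s1 s2; have := CMI_ge0 L a2 b (vjoin a c); rewrite /CMI.
rewrite (H_mem L (vjoin a2 (vjoin a c)) (vjoin a2 c)); last first.
  1,2: by move=> i; move: (s1 i) (s2 i); rewrite /= ?(mem_cat, in_nil); mem_cases.
rewrite (H_mem L (vjoin (vjoin a2 b) (vjoin a c)) (vjoin (vjoin a2 b) c)); last first.
  1,2: by move=> i; move: (s1 i) (s2 i); rewrite /= ?(mem_cat, in_nil); mem_cases.
rewrite (H_mem L (vjoin b (vjoin a c)) (vjoin (vjoin a b) c)); last first.
  1,2: by mem_tauto.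
lra.
Qed.

Lemma CMI_mono_r L a b b2 c :
  {subset b.1 <= b2.1 ++ c.1} -> {subset b.2 <= b2.2 ++ c.2} ->
  CMI law L a b c <= CMI law L a b2 c.
Proof. by move=> s1 s2; rewrite !(CMI_sym L a); apply: CMI_mono_l. Qed.

Lemma H_vjoin_ge L a c : H law L c <= H law L (vjoin a c).
Proof.
have := CMI_ge0 L a a c; rewrite /CMI.
rewrite (H_mem L (vjoin (vjoin a a) c) (vjoin a c)); first lra.
all: by mem_tauto.
Qed.

Lemma CMI_le_condH L a b c : CMI law L a b c <= H law L (vjoin a c) - H law L c.
Proof.
have := H_vjoin_ge L a (vjoin b c); rewrite /CMI.
rewrite (H_mem L (vjoin a (vjoin b c)) (vjoin (vjoin a b) c)); first lra.
all: by mem_tauto.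
Qed.

Lemma condH_antimono L a b c :
  H law L (vjoin a (vjoin b c)) - H law L (vjoin b c) <= H law L (vjoin a c) - H law L c.
Proof.
have := CMI_ge0 L a b c; rewrite /CMI.
rewrite (H_mem L (vjoin (vjoin a b) c) (vjoin a (vjoin b c))); first lra.
all: by mem_tauto.
Qed.

Definition bounded (a : var) (M : nat) :=
  (forall i, i \in a.1 -> (i <= M)%nat) /\ (forall i, i \in a.2 -> (i <= M)%nat).

Definition vshift (d : nat) (a : var) : var := (map (addn d) a.1, map (addn d) a.2).

Definition shifted (d : nat) (a b : var) :=
  b.1 =i map (addn d) a.1 /\ b.2 =i map (addn d) a.2.

Lemma bounded_vjoin a b M : bounded a M -> bounded b M -> bounded (vjoin a b) M.
Proof.
by move=> [a1 a2] [b1 b2]; split=> i; rewrite mem_cat => /orP[]; auto.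
Qed.

Lemma bounded_vshift d a M : bounded a M -> bounded (vshift d a) (M + d).
Proof.
by move=> [a1 a2]; split=> _ /mapP[i hi ->]; [have := a1 _ hi | have := a2 _ hi]; lia.
Qed.

Lemma shifted_vjoin d a b a' b' :
  shifted d a a' -> shifted d b b' -> shifted d (vjoin a b) (vjoin a' b').
Proof.
by move=> [a1 a2] [b1 b2]; split=> i; rewrite /= map_cat !mem_cat ?a1 ?a2 ?b1 ?b2.
Qed.

Lemma vshift0 a : vshift 0 a = a.
Proof. by case: a => s r; rewrite /vshift /= !(eq_map add0n) !map_id. Qed.

Lemma vshiftS d a : vshift d.+1 a = vshift 1 (vshift d a).
Proof.
by rewrite /vshift /= -!map_comp; congr pair; apply: eq_map => i /=; rewrite add1n addSn.
Qed.

Hypothesis law_init : forall n (w : window Xs Rs n),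
  law n w = \big[Rplus/0]_(w' : window Xs Rs n.+1 | winit n w' == w) law n.+1 w'.
Hypothesis law_tail : forall n (w : window Xs Rs n),
  law n w = \big[Rplus/0]_(w' : window Xs Rs n.+1 | wtail n w' == w) law n.+1 w'.

Lemma H_ext1 L a : bounded a L -> H law L a = H law L.+1 a.
Proof.
move=> [h1 h2]; rewrite !H_entropy; symmetry.
apply: (entropy_pushforward _ _ _ _ (winit L.+1)); first by move=> u; exact: law_init.
move=> w; rewrite /proj; congr pair; apply/eq_in_map => i hi /=; rewrite /winit ffunE.
- by congr (w _).1; apply/val_inj; rewrite /= !inordK //; have := h1 _ hi; lia.
- by congr (w _).2; apply/val_inj; rewrite /= !inordK //; have := h2 _ hi; lia.
Qed.

Lemma H_shift1 L a : bounded a L -> H law L a = H law L.+1 (vshift 1 a).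
Proof.
move=> [h1 h2]; rewrite !H_entropy; symmetry.
apply: (entropy_pushforward _ _ _ _ (wtail L.+1)); first by move=> u; exact: law_tail.
move=> w; rewrite /proj /vshift /= -!map_comp; congr pair; apply/eq_in_map => i hi /=;
  rewrite /wtail ffunE.
- by congr (w _).1; apply/ord_inj; rewrite lift0 /= !inordK //; have := h1 _ hi; lia.
- by congr (w _).2; apply/ord_inj; rewrite lift0 /= !inordK //; have := h2 _ hi; lia.
Qed.

Lemma H_ext M N a : bounded a M -> (M <= N)%nat -> H law M a = H law N a.
Proof.
move=> [h1 h2]; elim: N => [|N IH] le_MN; first by have -> : M = 0%nat by lia.
case: (eqVneq M N.+1) => [-> //|ne_MN].
rewrite IH; last lia.
by apply: H_ext1; split=> i hi; [have := h1 _ hi | have := h2 _ hi]; lia.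
Qed.

Lemma H_shift d M a : bounded a M -> H law M a = H law (M + d) (vshift d a).
Proof.
move=> ba; elim: d => [|d IH]; first by rewrite addn0 vshift0.
by rewrite addnS vshiftS IH; apply/H_shift1/bounded_vshift.
Qed.

Lemma H_stationary M N d a b :
  bounded a M -> (M + d <= N)%nat -> shifted d a b -> H law M a = H law N b.
Proof.
move=> ba le_N [e1 e2]; rewrite (H_shift d) // (H_ext _ N) //; last exact: bounded_vshift.
exact: H_mem.
Qed.

Lemma CMI_stationary M N d a b c a' b' c' :
  bounded a M -> bounded b M -> bounded c M -> (M + d <= N)%nat ->
  shifted d a a' -> shifted d b b' -> shifted d c c' ->
  CMI law M a b c = CMI law N a' b' c'.
Proof.
move=> ba bb bc le_N sa sb sc; rewrite /CMI.
by congr (_ + _ - _ - _); apply: (H_stationary _ _ d) => //;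
  do ?[apply: bounded_vjoin | apply: shifted_vjoin].
Qed.

Lemma MI_stationary M N d a b a' b' :
  bounded a M -> bounded b M -> (M + d <= N)%nat -> shifted d a a' -> shifted d b b' ->
  MI law M a b = MI law N a' b'.
Proof.
move=> ba bb le_N sa sb; rewrite /MI.
by congr (_ + _ - _); apply: (H_stationary _ _ d) => //;
  [apply: bounded_vjoin | apply: shifted_vjoin].
Qed.

Definition within (a : var) (s : seq nat) := {subset a.1 <= s} /\ {subset a.2 <= s}.

Hypothesis gen : generator_cond law.

Lemma CMI_generator_eq0 L t : (t <= L)%nat ->
  CMI law L (iota 0 t.+1, iota 0 t) (iota t.+1 (L - t), iota t.+1 (L - t)) (Rpos t) = 0.
Proof.
move=> le_tL; have := gen L t.
set past := (iota 0 t.+1, _); set rt := ([::], _); set fut := (iota t.+1 _, _) => gen_t.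
have H_gen : H law L (vjoin (vjoin past rt) fut) + H law L rt
             = H law L (vjoin past rt) + H law L (vjoin rt fut).
  rewrite !H_entropy /entropy -!Ropp_plus_distr -!big_split /=.
  congr (- _); apply: eq_bigr => w _.
  have [w_gt0|<-] := Rle_lt_or_eq_dec _ _ (law_ge0 L.+1 w); last ring.
  rewrite -!Rmult_plus_distr_l -!ln_mult; try exact: (pr_gt0 (law_ge0 L.+1) _ w w_gt0).
  by congr (_ * ln _); exact: gen_t.
rewrite /CMI (H_mem L (vjoin (vjoin past fut) rt) (vjoin (vjoin past rt) fut)).
  rewrite (H_mem L (vjoin fut rt) (vjoin rt fut)); first lra.
all: by mem_tauto.
Qed.

Lemma H_generator_split L t A B : (t <= L)%nat ->
  within A (iota 0 t.+1) -> within B (iota t.+1 (L - t)) ->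
  H law L (vjoin (vjoin A B) (Rpos t)) =
  H law L (vjoin A (Rpos t)) + H law L (vjoin B (Rpos t)) - H law L (Rpos t).
Proof.
move=> le_tL [A1 A2] [B1 B2].
have := CMI_generator_eq0 L t le_tL.
set past := (iota 0 t.+1, _); set fut := (iota t.+1 _, _) => indep.
have le_A : CMI law L A B (Rpos t) <= CMI law L past B (Rpos t).
  by apply: CMI_mono_l; [move=> i /A1 | move=> i /A2]; positions.
have le_B : CMI law L past B (Rpos t) <= CMI law L past fut (Rpos t).
  by apply: CMI_mono_r; [move=> i /B1 | move=> i /B2]; positions.
have := CMI_ge0 L A B (Rpos t); rewrite /CMI in indep le_A le_B *; lra.
Qed.

Lemma within_vjoin a b s : within a s -> within b s -> within (vjoin a b) s.
Proof.
by move=> [a1 a2] [b1 b2]; split=> i; rewrite mem_cat => /orP[]; auto.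
Qed.

Lemma CMI_drop_future L t a b c f : (t <= L)%nat -> t \in c.2 ->
  within a (iota 0 t.+1) -> within b (iota 0 t.+1) -> within c (iota 0 t.+1) ->
  within f (iota t.+1 (L - t)) ->
  CMI law L a b (vjoin c f) = CMI law L a b c.
Proof.
move=> le_tL tc wa wb wc wf.
have factor_future S : within S (iota 0 t.+1) ->
    H law L (vjoin S (vjoin c f))
    = H law L (vjoin S c) + H law L (vjoin f (Rpos t)) - H law L (Rpos t).
  move=> wS.
  rewrite (H_mem L _ (vjoin (vjoin (vjoin S c) f) (Rpos t))).
    rewrite H_generator_split //; last exact: within_vjoin.
    congr (_ + _ - _); apply: H_mem; first by mem_tauto.
    by move=> i; rewrite /= !mem_cat mem_seq1; case: eqP => [->|_]; rewrite ?tc ?orbT ?orbF.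
  - by mem_tauto.
  - by move=> i; rewrite /= !mem_cat mem_seq1; case: eqP => [->|_];
      rewrite ?tc ?orbT ?orbF //; mem_cases.
rewrite /CMI !factor_future //; last exact: within_vjoin.
rewrite (H_mem L (vjoin c f) (vjoin ([::], [::]) (vjoin c f))) // factor_future //.
by rewrite (H_mem L (vjoin ([::], [::]) c) c) //; lra.
Qed.

Tactic Notation "H_reorder" uconstr(x) uconstr(y) :=
  rewrite (H_mem _ x y); [|positions|positions].

Section Decomposition.
Variable k : nat.

(* In the window [0, m + k] time [t] sits at position [m + t]: [condH_past m] is
   H(X_{1:k} | X_{-m:0}), [J_trunc m] is I(X_{-m:0}; R_0 | X_{1:k}, R_k), and
   [CMI_Rk_past j] is I(R_k; X_{-j:0} | X_{1:k}) in the window [0, j + k]. *)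
Definition condH_past m :=
  H law (m + k) (vjoin (Xseg m.+1 k) (Xseg 0 m.+1)) - H law (m + k) (Xseg 0 m.+1).

Definition CMI_Rk_past j :=
  CMI law (j + k) (Rpos (j + k)%nat) (Xseg 0 j.+1) (Xseg j.+1 k).

Definition J_trunc m :=
  CMI law (m + k) (Xseg 0 m.+1) (Rpos m) (iota m.+1 k, [:: (m + k)%nat]).

Lemma zeta_approx_eq m : zeta_approx law k m
  = condH_past m - (H law k (vjoin (X1k k) (Rpos 0%nat)) - H law k (Rpos 0%nat)).
Proof.
rewrite /zeta_approx /condH_past /CMI /X1k.
H_reorder (vjoin (vjoin (Xseg m.+1 k) (Rpos m)) (Xseg 0 m.+1))
          (vjoin (vjoin (Xseg 0 m.+1) (Xseg m.+1 k)) (Rpos m)).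
rewrite H_generator_split; [|positions..].
H_reorder (vjoin (Rpos m) (Xseg 0 m.+1)) (vjoin (Xseg 0 m.+1) (Rpos m)).
rewrite (H_stationary k (m + k) m _ (vjoin (Xseg m.+1 k) (Rpos m))); [|positions..].
by rewrite (H_stationary k (m + k) m _ (Rpos m)); [lra|positions..].
Qed.

Lemma condH_past_ge0 m : 0 <= condH_past m.
Proof. by have := H_vjoin_ge (m + k) (Xseg m.+1 k) (Xseg 0 m.+1); rewrite /condH_past; lra. Qed.

(* Slid into the window of [condH_past m.+1], [condH_past m] is the same
   conditional entropy without X_{-m-1} in the condition. *)
Lemma condH_past_decr m : condH_past m.+1 <= condH_past m.
Proof.
have := condH_antimono (m.+1 + k) (Xseg m.+2 k) (Xseg 0 1) (Xseg 1 m.+1).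
rewrite /condH_past.
H_reorder (vjoin (Xseg m.+2 k) (vjoin (Xseg 0 1) (Xseg 1 m.+1)))
          (vjoin (Xseg m.+2 k) (Xseg 0 m.+2)).
H_reorder (vjoin (Xseg 0 1) (Xseg 1 m.+1)) (Xseg 0 m.+2).
rewrite (H_stationary (m + k) (m.+1 + k) 1 (vjoin (Xseg m.+1 k) (Xseg 0 m.+1))
                                          (vjoin (Xseg m.+2 k) (Xseg 1 m.+1))); [|positions..].
by rewrite (H_stationary (m + k) (m.+1 + k) 1 (Xseg 0 m.+1) (Xseg 1 m.+1)); [|positions..].
Qed.

Lemma CMI_Rk_past_incr j : CMI_Rk_past j <= CMI_Rk_past j.+1.
Proof.
rewrite /CMI_Rk_past (CMI_stationary (j + k) (j.+1 + k) 1 _ _ _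
  (Rpos (j.+1 + k)%nat) (Xseg 1 j.+1) (Xseg j.+2 k)); [|positions..].
by apply: CMI_mono_r; positions.
Qed.

Lemma CMI_Rk_past_le j :
  CMI_Rk_past j <= H law k (vjoin (Rpos k) (X1k k)) - H law k (X1k k).
Proof.
have := CMI_le_condH (j + k) (Rpos (j + k)%nat) (Xseg 0 j.+1) (Xseg j.+1 k).
rewrite /X1k (H_stationary k (j + k) j (vjoin (Rpos k) (Xseg 1 k))
                                    (vjoin (Rpos (j + k)%nat) (Xseg j.+1 k))); [|positions..].
by rewrite (H_stationary k (j + k) j (Xseg 1 k) (Xseg j.+1 k)); [|positions..].
Qed.

Lemma J_approx_eq m n : J_approx law k m n = J_trunc m.
Proof.
rewrite /J_approx (CMI_mem _ _ _ _ (Xseg 0 m.+1) (Rpos m)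
  (vjoin (iota m.+1 k, [:: (m + k)%nat]) (Xseg (m + k).+1 n))); [|positions..].
rewrite (CMI_drop_future _ (m + k)); [|positions..].
by rewrite /J_trunc (CMI_stationary (m + k) (m + n + k) 0 _ _ _
  (Xseg 0 m.+1) (Rpos m) (iota m.+1 k, [:: (m + k)%nat])); [|positions..].
Qed.

(* The generator condition at time 0 separates [R_k] from the past only if
   [R_k] lies strictly after time 0. *)
Hypothesis k_gt0 : (0 < k)%nat.

Lemma J_trunc_generator m : J_trunc m = zeta_approx law k m
  + MI law (m + k) (Rpos m) (Xseg 0 m.+1) - MI law (m + k) (Rpos m) (Xseg m.+1 k)
  - MI law (m + k) (Rpos (m + k)%nat) (vjoin (Xseg 0 m.+1) (Xseg m.+1 k))
  + MI law (m + k) (Rpos (m + k)%nat) (Xseg m.+1 k).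
Proof.
rewrite /J_trunc /zeta_approx /CMI /MI.
H_reorder (vjoin (vjoin (Xseg 0 m.+1) (Rpos m)) (iota m.+1 k, [:: (m + k)%nat]))
          (vjoin (vjoin (Xseg 0 m.+1) (iota m.+1 k, [:: (m + k)%nat])) (Rpos m)).
rewrite (H_generator_split _ m (Xseg 0 m.+1) (iota m.+1 k, [:: (m + k)%nat])); [|positions..].
H_reorder (vjoin (vjoin (Xseg m.+1 k) (Rpos m)) (Xseg 0 m.+1))
          (vjoin (vjoin (Xseg 0 m.+1) (Xseg m.+1 k)) (Rpos m)).
rewrite (H_generator_split _ m (Xseg 0 m.+1) (Xseg m.+1 k)); [|positions..].
H_reorder (vjoin (Rpos m) (iota m.+1 k, [:: (m + k)%nat]))
          (vjoin (iota m.+1 k, [:: (m + k)%nat]) (Rpos m)).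
H_reorder (vjoin (Xseg m.+1 k) (Xseg 0 m.+1)) (vjoin (Xseg 0 m.+1) (Xseg m.+1 k)).
H_reorder (vjoin (Rpos m) (Xseg 0 m.+1)) (vjoin (Xseg 0 m.+1) (Rpos m)).
H_reorder (vjoin (Rpos m) (Xseg m.+1 k)) (vjoin (Xseg m.+1 k) (Rpos m)).
H_reorder (vjoin (Xseg 0 m.+1) (iota m.+1 k, [:: (m + k)%nat]))
          (vjoin (Rpos (m + k)%nat) (vjoin (Xseg 0 m.+1) (Xseg m.+1 k))).
H_reorder (iota m.+1 k, [:: (m + k)%nat]) (vjoin (Rpos (m + k)%nat) (Xseg m.+1 k)).
lra.
Qed.

Lemma J_trunc_eq m : (k <= m)%nat ->
  J_trunc m = zeta_approx law k m
    - (MI law k (Rpos 0%nat) (X1k k) - MI law k (Rpos k) (X1k k))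
    + CMI_Rk_past (m - k) - CMI_Rk_past m.
Proof.
move=> le_km; rewrite J_trunc_generator.
have chain_m : CMI_Rk_past m
    = MI law (m + k) (Rpos (m + k)%nat) (vjoin (Xseg 0 m.+1) (Xseg m.+1 k))
      - MI law (m + k) (Rpos (m + k)%nat) (Xseg m.+1 k).
  exact: CMI_chain.
have chain_mk : CMI_Rk_past (m - k)
    = MI law (m + k) (Rpos (m + k)%nat) (vjoin (Xseg k (m - k).+1) (Xseg m.+1 k))
      - MI law (m + k) (Rpos (m + k)%nat) (Xseg m.+1 k).
  rewrite /CMI_Rk_past (CMI_stationary _ (m + k) k _ _ _
    (Rpos (m + k)%nat) (Xseg k (m - k).+1) (Xseg m.+1 k)); [exact: CMI_chain|positions..].
(* Sliding the window by [k] moves [(R_0, X_{-m:0})] to [(R_k, X_{k-m:k})]. *)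
have shift_past : MI law (m + k) (Rpos m) (Xseg 0 m.+1)
    = MI law (m + k) (Rpos (m + k)%nat) (vjoin (Xseg k (m - k).+1) (Xseg m.+1 k)).
  rewrite -(MI_stationary m (m + k) 0 (Rpos m) (Xseg 0 m.+1)); [|positions..].
  by apply: (MI_stationary _ _ k); positions.
have shift_R0 : MI law k (Rpos 0%nat) (X1k k) = MI law (m + k) (Rpos m) (Xseg m.+1 k).
  by apply: (MI_stationary _ _ m); rewrite /X1k; positions.
have shift_Rk : MI law k (Rpos k) (X1k k) = MI law (m + k) (Rpos (m + k)%nat) (Xseg m.+1 k).
  by apply: (MI_stationary _ _ m); rewrite /X1k; positions.
lra.
Qed.

End Decomposition.

End Window.

Lemma has_lb_of_ge0 (u : nat -> R) : (forall n, 0 <= u n) -> has_lb u.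
Proof. by move=> u_ge0; exists 0 => _ [n ->]; rewrite /opp_seq; have := u_ge0 n; lra. Qed.

Lemma has_ub_of_le (u : nat -> R) M : (forall n, u n <= M) -> has_ub u.
Proof. by move=> u_le; exists M => _ [n ->]; exact: u_le. Qed.

Lemma Un_cv_const c : Un_cv (fun _ => c) c.
Proof. by move=> eps eps_gt0; exists 0%nat => n _; rewrite /R_dist Rminus_diag Rabs_R0; lra. Qed.

Lemma Un_cv_eventually (u v : nat -> R) l N :
  (forall n, (N <= n)%nat -> v n = u n) -> Un_cv u l -> Un_cv v l.
Proof.
move=> uv u_cv eps eps_gt0; have [N0 uN0] := u_cv eps eps_gt0.
by exists (N0 + N)%nat => n le_n; rewrite uv; [apply: uN0|]; lia.
Qed.

Lemma Un_cv_subn (u : nat -> R) l k : Un_cv u l -> Un_cv (fun m => u (m - k)%nat) l.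
Proof.
move=> u_cv eps eps_gt0; have [N0 uN0] := u_cv eps eps_gt0.
by exists (N0 + k)%nat => n le_n; apply: uN0; lia.
Qed.

Lemma dlim_of_Un_cv (u : nat -> R) l (J : nat -> nat -> R) :
  (forall m n, J m n = u m) -> Un_cv u l -> dlim J l.
Proof.
move=> Ju u_cv eps eps_gt0; have [N0 uN0] := u_cv eps eps_gt0.
by exists N0 => m n le_m _; rewrite Ju; apply: uN0; lia.
Qed.

Theorem mainTheorem11 (Xs Rs : finType) (law : forall n, window Xs Rs n -> R)
  (Hlaw : stationary_law law) (Hgen : generator_cond law) (k : nat) (hk : (1 <= k)%nat) :
  H law k (vjoin ([::], [:: k]) (X1k k)) - H law k (vjoin ([::], [:: 0%nat]) (X1k k))
    = MI law k ([::], [:: 0%nat]) (X1k k) - MI law k ([::], [:: k]) (X1k k) /\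
  exists zeta J : R,
    Un_cv (fun m => zeta_approx law k m) zeta /\
    dlim (fun m n => J_approx law k m n) J /\
    MI law k ([::], [:: 0%nat]) (X1k k) - MI law k ([::], [:: k]) (X1k k) = zeta - J.
Proof.
case: Hlaw => law_ge0 [_ [law_init law_tail]].
have H_R0_Rk : H law k ([::], [:: 0%nat]) = H law k ([::], [:: k]).
  rewrite -(H_stationary law law_init law_tail 0 k 0 ([::], [:: 0%nat])); [|positions..].
  by apply: (H_stationary law law_init law_tail 0 k k); positions.
split; first by rewrite /MI; lra.
have [h h_cv] := decreasing_cv _ (condH_past_decr law law_ge0 law_init law_tail k)
                   (has_lb_of_ge0 _ (condH_past_ge0 law law_ge0 k)).
have [a a_cv] := growing_cv _ (CMI_Rk_past_incr law law_ge0 law_init law_tail k)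
                   (has_ub_of_le _ _ (CMI_Rk_past_le law law_ge0 law_init law_tail k)).
set c := H law k (vjoin (X1k k) ([::], [:: 0%nat])) - H law k ([::], [:: 0%nat]).
set C := MI law k _ _ - MI law k _ _.
have zeta_cv : Un_cv (zeta_approx law k) (h - c).
  apply: (Un_cv_eventually _ _ _ 0 _ (CV_minus _ _ _ _ h_cv (Un_cv_const c))) => m _.
  exact: (zeta_approx_eq law law_ge0 law_init law_tail Hgen).
exists (h - c), (h - c - C); split => //; split; last ring.
apply: (dlim_of_Un_cv _ _ _ (J_approx_eq law law_ge0 law_init law_tail Hgen k)).
have := CV_minus _ _ _ _ (CV_plus _ _ _ _ (CV_minus _ _ _ _ zeta_cv (Un_cv_const C))
          (Un_cv_subn _ _ k a_cv)) a_cv.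
rewrite (_ : h - c - C + a - a = h - c - C); last ring.
apply: (Un_cv_eventually _ _ _ k) => m le_km.
exact: (J_trunc_eq law law_ge0 law_init law_tail Hgen k hk).
Qed.
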